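(* Suppose the system is IFS$_m$, with a controller $\Psi:\mathcal{H}_-\to\mathbb{R}^m$ such that $\|\phi(k,\sigma,x_0,\Psi)\|\le C\gamma^k\|x_0\|$ for all $x_0\in\mathbb{R}^n,\sigma\in\Sigma^\omega,k\in\mathbb{N}$, with $C>1$, $\gamma\in[0,1)$. Then there exist a norm $V$ on $\mathbb{R}^n$ satisfying $\|x\|\le V(x)\le\frac{C}{1-\gamma}\|x\|$ for all $x$, and a static feedback $\Phi:\mathbb{R}^n\to\mathbb{R}^m$ that is homogeneous of degree 1 (i.e. $\Phi(\lambda x)=\lambda\Phi(x)$ for all $\lambda\in\mathbb{R}$, $x\in\mathbb{R}^n$) such that $$V(A_ix+B_i\Phi(x))\le\Big(1-\frac{1-\gamma}{C}\Big)V(x)\quad\text{for all }i\in\Sigma,\ x\in\mathbb{R}^n.$$ Consequently the closed loop $x(k+1)=A_{\sigma(k)}x(k)+B_{\sigma(k)}\Phi(x(k))$ is uniformly exponentially stable.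
   Context: Let $\Sigma$ be a finite nonempty set and $\{(A_i,B_i)\in\mathbb{R}^{n\times n}\times\mathbb{R}^{n\times m} : i\in\Sigma\}$. Consider $x(k+1)=A_{\sigma(k)}x(k)+B_{\sigma(k)}u(k)$, $k\in\mathbb{N}=\{0,1,\dots\}$, with arbitrary switching signal $\sigma:\mathbb{N}\to\Sigma$ (set of all such: $\Sigma^\omega$). $\|\cdot\|$ is the Euclidean norm. $\mathcal{H}_-$ is the set of all tuples $(x_k,\dots,x_0;\,i_{k-1},\dots,i_0)$ with $k\in\mathbb{N}$, $x_j\in\mathbb{R}^n$, $i_j\in\Sigma$ (mode string empty when $k=0$). For a function $\Psi:\mathcal{H}_-\to\mathbb{R}^m$ (a current-mode-independent controller with memory), $\phi(k,\sigma,x_0,\Psi)$ denotes the closed-loop trajectory defined by $x(0)=x_0$ and $x(k+1)=A_{\sigma(k)}x(k)+B_{\sigma(k)}\Psi(x(k),\dots,x(0);\,\sigma(k-1),\dots,\sigma(0))$. The system is IFS$_m$ if there exists such $\Psi$ with constants $M>0,\gamma\in[0,1)$ such that $\|\phi(k,\sigma,x_0,\Psi)\|\le M\gamma^k\|x_0\|$ for all $x_0,\sigma,k$. A closed loop is uniformly exponentially stable if there exist $M>0,\gamma\in[0,1)$ with $\|x(k)\|\le M\gamma^k\|x(0)\|$ for all initial states, all $\sigma\in\Sigma^\omega$ and all $k\in\mathbb{N}$. *)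

From HB Require Import structures.
From mathcomp Require Import all_boot all_order all_algebra.
From mathcomp Require Import reals.
Set Implicit Arguments. Unset Strict Implicit. Unset Printing Implicit Defensive.
Import Order.TTheory GRing.Theory Num.Theory.
Local Open Scope ring_scope.

Section Defs.
Variables (R : realType) (n m : nat) (Sigma : finType).

Definition enorm (x : 'cV[R]_n) : R := Num.sqrt (\sum_(i < n) x i ord0 ^+ 2).

Definition is_norm (V : 'cV[R]_n -> R) : Prop :=
  [/\ forall x, 0 <= V x,
      forall x, V x = 0 -> x = 0,
      forall (l : R) x, V (l *: x) = `|l| * V x &
      forall x y, V (x + y) <= V x + V y].

(* A history (x_k,...,x_0; i_{k-1},...,i_0) in H_- is encoded by the pair of
   sequences [:: x_k; ...; x_0] and [:: i_{k-1}; ...; i_0]. *)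
Definition controller := seq 'cV[R]_n -> seq Sigma -> 'cV[R]_m.

Definition modes_hist (s : nat -> Sigma) (k : nat) : seq Sigma :=
  rev (mkseq s k).

Variables (A : Sigma -> 'M[R]_n) (B : Sigma -> 'M[R]_(n, m)).

Fixpoint state_hist (Psi : controller) (s : nat -> Sigma) (x0 : 'cV[R]_n)
    (k : nat) : seq 'cV[R]_n :=
  match k with
  | 0 => [:: x0]
  | k'.+1 =>
      let h := state_hist Psi s x0 k' in
      (A (s k') *m head 0 h + B (s k') *m Psi h (modes_hist s k')) :: h
  end.

Definition traj (Psi : controller) (s : nat -> Sigma) (x0 : 'cV[R]_n) (k : nat)
  : 'cV[R]_n := head 0 (state_hist Psi s x0 k).

Fixpoint traj_static (Phi : 'cV[R]_n -> 'cV[R]_m) (s : nat -> Sigma)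
    (x0 : 'cV[R]_n) (k : nat) : 'cV[R]_n :=
  match k with
  | 0 => x0
  | k'.+1 => let x := traj_static Phi s x0 k' in A (s k') *m x + B (s k') *m Phi x
  end.

Definition UES_static (Phi : 'cV[R]_n -> 'cV[R]_m) : Prop :=
  exists (M g : R), [/\ 0 < M, 0 <= g, g < 1 &
    forall (x0 : 'cV[R]_n) (s : nat -> Sigma) (k : nat),
      enorm (traj_static Phi s x0 k) <= M * g ^+ k * enorm x0].

End Defs.

(* The Lyapunov function is the value of a robust control game: [value x] is the
   least [M] such that some feedback on the mode history keeps the accumulated
   cost [\sum_k |x(k)|] below [M] against every switching signal.  Sums and
   multiples of strategies serve sums and multiples of initial states, so the
   value is a norm; it dominates [|x|] (the first term of the cost), and the
   given controller is such a strategy of cost at most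
   [(1 + C gamma / (1 - gamma)) |x|], which is smaller than [C / (1 - gamma) |x|]
   by [(C - 1) |x|].  Dynamic programming gives for each [x] an input [u] with
   [value (A_i x + B_i u) <= value x - |x| + e] for all modes [i]; that margin
   absorbs [e] and yields the contraction factor [1 - (1 - gamma) / C].  Picking
   [u] on one point of each line through the origin and scaling makes the
   feedback homogeneous. *)

From HB Require Import structures.
From mathcomp Require Import all_boot all_order all_algebra.
From mathcomp Require Import boolp classical_sets reals ring lra.
Import Order.TTheory GRing.Theory Num.Theory.
Set Implicit Arguments. Unset Strict Implicit. Unset Printing Implicit Defensive.
Local Open Scope ring_scope.

Lemma lagrange_identity (R : comPzRingType) (I : finType) (f g : I -> R) :
  \sum_i \sum_j (f i * g j - f j * g i) ^+ 2 =
  ((\sum_i f i ^+ 2) * (\sum_i g i ^+ 2) - (\sum_i f i * g i) ^+ 2) *+ 2.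
Proof.
rewrite mulrnBl mulr2n {2}mulrC expr2 !big_distrlr /= -big_split -sumrMnl -sumrB.
apply: eq_bigr => i _; rewrite -big_split -sumrMnl -sumrB /=.
by apply: eq_bigr => j _; ring.
Qed.

Lemma cauchy_schwarz (R : rcfType) (I : finType) (f g : I -> R) :
  \sum_i f i * g i <= Num.sqrt (\sum_i f i ^+ 2) * Num.sqrt (\sum_i g i ^+ 2).
Proof.
have sqr_sum_ge0 (h : I -> R) : 0 <= \sum_i h i ^+ 2.
  by apply: sumr_ge0 => i _; exact: sqr_ge0.
have sq_le : (\sum_i f i * g i) ^+ 2 <= (\sum_i f i ^+ 2) * (\sum_i g i ^+ 2).
  rewrite -subr_ge0 -(pmulrn_lge0 _ (ltn0Sn 1)) -lagrange_identity.
  by apply: sumr_ge0 => i _; exact: sqr_sum_ge0.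
rewrite -sqrtrM ?sqr_sum_ge0 //; apply: le_trans (ler_norm _) _.
by rewrite -sqrtr_sqr ler_sqrt // mulr_ge0 ?sqr_sum_ge0.
Qed.

Section EuclideanNorm.
Variables (R : realType) (n : nat).
Implicit Types x y : 'cV[R]_n.

Lemma enorm_ge0 x : 0 <= enorm x.
Proof. exact: sqrtr_ge0. Qed.

Lemma enorm_eq0 x : enorm x = 0 -> x = 0.
Proof.
move/eqP; rewrite sqrtr_eq0 => sum_le0.
have : \sum_i x i ord0 ^+ 2 == 0.
  by rewrite eq_le sum_le0 sumr_ge0 // => i _; exact: sqr_ge0.
rewrite psumr_eq0 => [/allP x0|i _]; last exact: sqr_ge0.
apply/matrixP => i j; rewrite (ord1 j) mxE.
by apply/eqP; rewrite -sqrf_eq0; exact: x0 (mem_index_enum i).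
Qed.

Lemma enormZ (l : R) x : enorm (l *: x) = `|l| * enorm x.
Proof.
rewrite /enorm (eq_bigr (fun i => l ^+ 2 * x i ord0 ^+ 2)) => [|i _].
  by rewrite -mulr_sumr sqrtrM ?sqr_ge0 // sqrtr_sqr.
by rewrite mxE exprMn.
Qed.

Lemma enorm0 : enorm (0 : 'cV[R]_n) = 0.
Proof. by rewrite -(scale0r 0) enormZ normr0 mul0r. Qed.

Lemma enormD x y : enorm (x + y) <= enorm x + enorm y.
Proof.
have sqr_sum_ge0 (z : 'cV[R]_n) : 0 <= \sum_i z i ord0 ^+ 2.
  by apply: sumr_ge0 => i _; exact: sqr_ge0.
rewrite -(@ler_pXn2r _ 2) ?nnegrE ?addr_ge0 ?enorm_ge0 //.
rewrite sqrrD /enorm !sqr_sqrtr ?sqr_sum_ge0 //.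
rewrite (eq_bigr (fun i => x i ord0 ^+ 2 + (x i ord0 * y i ord0) *+ 2 + y i ord0 ^+ 2)).
  by rewrite !big_split /= -mulr2n lerD2r lerD2l lerMn2r cauchy_schwarz.
by move=> i _; rewrite mxE sqrrD.
Qed.

End EuclideanNorm.

Local Open Scope classical_set_scope.

Section ValueFunction.
Variables (R : realType) (n m : nat) (Sigma : finType).
Variables (A : Sigma -> 'M[R]_n) (B : Sigma -> 'M[R]_(n, m)).
Implicit Types (x y : 'cV[R]_n) (s : nat -> Sigma) (M : R).

(* Feedback on the past modes only: for a fixed initial state, every controller
   with memory is of this form. *)
Definition strategy := seq Sigma -> 'cV[R]_m.
Implicit Types w : strategy.

Fixpoint strategy_traj x w s k : 'cV[R]_n :=
  if k is k'.+1 then A (s k') *m strategy_traj x w s k' + B (s k') *m w (modes_hist s k')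
  else x.

Definition partial_cost x w s N := \sum_(k < N) enorm (strategy_traj x w s k).

Definition admissible_cost x M := exists w, forall s N, partial_cost x w s N <= M.

Definition value x := inf [set M | admissible_cost x M].

Lemma strategy_trajD x y w1 w2 s k :
  strategy_traj (x + y) (fun h => w1 h + w2 h) s k = strategy_traj x w1 s k + strategy_traj y w2 s k.
Proof. by elim: k => //= k ->; rewrite !mulmxDr addrACA. Qed.

Lemma strategy_trajZ l x w s k :
  strategy_traj (l *: x) (fun h => l *: w h) s k = l *: strategy_traj x w s k.
Proof. by elim: k => //= k ->; rewrite -!scalemxAr scalerDr. Qed.

Lemma admissible_costD x y M1 M2 :
  admissible_cost x M1 -> admissible_cost y M2 -> admissible_cost (x + y) (M1 + M2).
Proof.
move=> [w1 cost1] [w2 cost2]; exists (fun h => w1 h + w2 h) => s N.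
rewrite /partial_cost; apply: le_trans (lerD (cost1 s N) (cost2 s N)).
by rewrite -big_split /= ler_sum // => k _; rewrite strategy_trajD enormD.
Qed.

Lemma admissible_costZ l x M :
  admissible_cost x M -> admissible_cost (l *: x) (`|l| * M).
Proof.
move=> [w cost]; exists (fun h => l *: w h) => s N.
rewrite /partial_cost; under eq_bigr do rewrite strategy_trajZ enormZ.
by rewrite -mulr_sumr ler_wpM2l ?cost.
Qed.

(* Dynamic programming: after the first step, playing [w] shifted by the
   realised mode [i] costs at most what is left of [M]. *)
Lemma admissible_cost_step x M : admissible_cost x M ->
  exists u, forall i, admissible_cost (A i *m x + B i *m u) (M - enorm x).
Proof.
move=> [w cost]; exists (w [::]) => i; exists (fun h => w (rcons h i)) => s N.
pose si k := if k is k'.+1 then s k' else i.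
have modes_si k : modes_hist si k.+1 = rcons (modes_hist s k) i.
  rewrite /modes_hist /mkseq /= rev_cons (iotaDl 1 0) -map_comp.
  by congr (rcons (rev _) _); apply: eq_map.
have traj_si k : strategy_traj x w si k.+1 =
    strategy_traj (A i *m x + B i *m w [::]) (fun h => w (rcons h i)) s k.
  by elim: k => //= k <-; rewrite modes_si.
have := cost si N.+1; rewrite /partial_cost big_ord_recl.
under eq_bigr => k _ do rewrite (_ : lift ord0 k = k.+1 :> nat) // traj_si.
by rewrite lerBrDl.
Qed.

Variable s0 : Sigma.

Lemma admissible_cost_ge x M : admissible_cost x M -> enorm x <= M.
Proof.
by move=> [w cost]; have := cost (fun=> s0) 1%N; rewrite /partial_cost big_ord1.
Qed.

Variable c : R.
Hypothesis admissible_lin : forall x, admissible_cost x (c * enorm x).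

Lemma has_inf_admissible x : has_inf [set M | admissible_cost x M].
Proof.
split; first by exists (c * enorm x); exact: admissible_lin.
by exists (enorm x) => M /admissible_cost_ge.
Qed.

Lemma value_le x M : admissible_cost x M -> value x <= M.
Proof. by move=> xM; apply: ge_inf => //; case: (has_inf_admissible x). Qed.

Lemma lb_le_value x r : (forall M, admissible_cost x M -> r <= M) -> r <= value x.
Proof. by move=> lb; apply: lb_le_inf => //; case: (has_inf_admissible x). Qed.

Lemma value_approx x e : 0 < e -> exists2 M, admissible_cost x M & M < value x + e.
Proof. by move=> e0; apply: inf_adherent => //; exact: has_inf_admissible. Qed.

Lemma enorm_le_value x : enorm x <= value x.
Proof. exact/lb_le_value/admissible_cost_ge. Qed.

Lemma value_le_lin x : value x <= c * enorm x.
Proof. exact/value_le/admissible_lin. Qed.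

Lemma value_ge0 x : 0 <= value x.
Proof. exact: le_trans (enorm_ge0 x) (enorm_le_value x). Qed.

Lemma value_eq0 x : value x = 0 -> x = 0.
Proof.
move=> v0; apply: enorm_eq0; apply/eqP.
by rewrite eq_le enorm_ge0 andbT -v0 enorm_le_value.
Qed.

Lemma valueD x y : value (x + y) <= value x + value y.
Proof.
apply/ler_addgt0Pr => e e0.
have [|Mx x_Mx Mx_lt] := value_approx x (e := e / 2); first by rewrite divr_gt0.
have [|My y_My My_lt] := value_approx y (e := e / 2); first by rewrite divr_gt0.
apply: le_trans (value_le (admissible_costD x_Mx y_My)) _; lra.
Qed.

Lemma valueZ_le l x : value (l *: x) <= `|l| * value x.
Proof.
have [->|l0] := eqVneq l 0.
  by rewrite scale0r normr0 mul0r (le_trans (value_le_lin _)) // enorm0 mulr0.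
rewrite -ler_pdivrMl ?normr_gt0 //; apply: lb_le_value => M xM.
by rewrite ler_pdivrMl ?normr_gt0 //; apply/value_le/admissible_costZ.
Qed.

Lemma valueZ l x : value (l *: x) = `|l| * value x.
Proof.
apply/eqP; rewrite eq_le valueZ_le /=.
have [->|l0] := eqVneq l 0; first by rewrite normr0 mul0r value_ge0.
rewrite -ler_pdivlMl ?normr_gt0 // -normrV ?unitfE //.
by rewrite -[X in value X](scale1r x) -(mulVf l0) -scalerA valueZ_le.
Qed.

Lemma value0 : value 0 = 0.
Proof. by rewrite -(scale0r (0 : 'cV[R]_n)) valueZ normr0 mul0r. Qed.

Lemma value_norm : is_norm value.
Proof. by split; [exact: value_ge0 | exact: value_eq0 | exact: valueZ | exact: valueD]. Qed.

Lemma value_step x e : 0 < e ->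
  exists u, forall i, value (A i *m x + B i *m u) <= value x - enorm x + e.
Proof.
move=> e0; have [M xM M_lt] := value_approx x e0.
have [u next_M] := admissible_cost_step xM; exists u => i.
apply: le_trans (value_le (next_M i)) _; lra.
Qed.

(* Take [e = (1 - c/d) |x|] in [value_step] and use [value x <= c |x|]. *)
Lemma value_contraction d x : 0 < d -> c < d ->
  exists u, forall i, value (A i *m x + B i *m u) <= (1 - d^-1) * value x.
Proof.
move=> d0 cd; have [->|x0] := eqVneq x 0.
  by exists 0 => i; rewrite !mulmx0 addr0 value0 mulr0.
have nx0 : 0 < enorm x.
  by rewrite lt_def enorm_ge0 andbT; apply: contra_neq x0; exact: enorm_eq0.
have slack0 : 0 < enorm x * (1 - c / d) by rewrite mulr_gt0 // subr_gt0 ltr_pdivrMr // mul1r.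
have [u next_le] := value_step x slack0; exists u => i.
apply: le_trans (next_le i) _.
have : value x / d <= c * enorm x / d by rewrite ler_pM2r ?invr_gt0 // value_le_lin.
rewrite mulrBr mulr1 mulrBl mul1r [c * _]mulrC mulrA; lra.
Qed.

End ValueFunction.

(* Choose a value on one representative of each line through the origin and
   extend it by scaling. *)
Lemma homogeneous_selection (K : fieldType) (V U : lmodType K) (P : V -> U -> Prop) :
  (forall l x u, P x u -> P (l *: x) (l *: u)) -> (forall x, exists u, P x u) ->
  exists Phi : V -> U, (forall l x, Phi (l *: x) = l *: Phi x) /\ forall x, P x (Phi x).
Proof.
move=> P_scale P_ex.
pose line x : set V := [set y | exists2 l, l != 0 & y = l *: x].
pose rep x := xget 0 (line x).
pose coef x := xget 0 [set l : K | x = l *: rep x].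
pose Phi x := if x == 0 then 0 else coef x *: xget 0 (P (rep x)).
have rep_line x : x != 0 -> exists2 l, l != 0 & rep x = l *: x.
  move=> x0; suff : line x (rep x) by [].
  by apply: xgetPex; exists x, 1; rewrite ?oner_eq0 ?scale1r.
have coefP x : x != 0 -> x = coef x *: rep x.
  move=> x0; suff : [set l : K | x = l *: rep x] (coef x) by [].
  apply: xgetPex; have [l l0 ->] := rep_line x x0; exists l^-1.
  by rewrite /= scalerA mulVf ?scale1r.
exists Phi; split=> [l x|x]; last first.
  rewrite /Phi; have [->|x0] := eqVneq x 0.
    by have [u /(P_scale 0)] := P_ex 0; rewrite !scale0r.
  by rewrite {1}(coefP x x0); apply: P_scale; apply: xgetPex; exact: P_ex.
rewrite /Phi; have [->|x0] := eqVneq x 0; first by rewrite scaler0 eqxx scaler0.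
have [->|l0] := eqVneq l 0; first by rewrite !scale0r eqxx.
have lx0 : l *: x != 0 by rewrite scaler_eq0 negb_or l0.
have line_lx : line (l *: x) = line x.
  apply/seteqP; split=> y [k k0 ->].
    by exists (k * l); rewrite ?mulf_neq0 ?scalerA.
  by exists (k / l); rewrite ?mulf_neq0 ?invr_eq0 // scalerA divfK.
have rep_lx : rep (l *: x) = rep x by rewrite /rep line_lx.
have rep0 : rep x != 0.
  by have [k k0 ->] := rep_line x x0; rewrite scaler_eq0 negb_or k0.
have coef_lx : coef (l *: x) = l * coef x.
  have : (coef (l *: x) - l * coef x) *: rep x == 0.
    by rewrite scalerBl -scalerA -coefP // -{1}rep_lx -coefP // subrr.
  by rewrite scaler_eq0 (negbTE rep0) orbF subr_eq0 => /eqP.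
by rewrite (negbTE lx0) rep_lx coef_lx scalerA.
Qed.

Lemma UES_static_of_lyapunov (R : realType) (n m : nat) (Sigma : finType)
    (A : Sigma -> 'M[R]_n) (B : Sigma -> 'M[R]_(n, m)) (Phi : 'cV[R]_n -> 'cV[R]_m)
    (V : 'cV[R]_n -> R) (K rho : R) :
  0 < K -> 0 <= rho -> rho < 1 ->
  (forall x, enorm x <= V x /\ V x <= K * enorm x) ->
  (forall i x, V (A i *m x + B i *m Phi x) <= rho * V x) ->
  UES_static A B Phi.
Proof.
move=> K0 rho0 rho1 V_bounds V_decr; exists K, rho; split=> // x0 s k.
have V_traj : V (traj_static A B Phi s x0 k) <= rho ^+ k * V x0.
  elim: k => [|k IH]; first by rewrite expr0 mul1r.
  by rewrite exprS -mulrA (le_trans (V_decr _ _)) // ler_wpM2l.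
apply: le_trans (proj1 (V_bounds _)) (le_trans V_traj _).
by rewrite [K * _]mulrC -mulrA ler_wpM2l ?exprn_ge0 //; case: (V_bounds x0).
Qed.

Lemma geometric_sum_le (R : realFieldType) (g : R) (N : nat) :
  0 <= g < 1 -> \sum_(k < N) g ^+ k <= (1 - g)^-1.
Proof.
case/andP=> g0 g1; have q0 : 0 < 1 - g by rewrite subr_gt0.
rewrite -[(1 - g)^-1]mul1r ler_pdivlMr // mulrC -opprB mulNr -subrX1 opprB.
by rewrite lerBlDr lerDl exprn_ge0.
Qed.

Section ControllerStrategy.
Variables (R : realType) (n m : nat) (Sigma : finType).
Variables (A : Sigma -> 'M[R]_n) (B : Sigma -> 'M[R]_(n, m)).
Variable Psi : controller R n m Sigma.

(* The state history [:: x(k); ...; x(0)] of the closed loop with [Psi] is a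
   function of the initial state and of the mode history alone. *)
Fixpoint hist_of_modes (x : 'cV[R]_n) (h : seq Sigma) : seq 'cV[R]_n :=
  if h is i :: h' then
    let xh := hist_of_modes x h' in (A i *m head 0 xh + B i *m Psi xh h') :: xh
  else [:: x].

Lemma modes_histS (s : nat -> Sigma) k : modes_hist s k.+1 = s k :: modes_hist s k.
Proof. by rewrite /modes_hist mkseqS rev_rcons. Qed.

Lemma state_hist_modes s x k : state_hist A B Psi s x k = hist_of_modes x (modes_hist s k).
Proof. by elim: k => //= k ->; rewrite modes_histS. Qed.

Definition controller_strategy x : strategy R m Sigma :=
  fun h => Psi (hist_of_modes x h) h.

Lemma strategy_traj_controller x s k :
  strategy_traj A B x (controller_strategy x) s k = traj A B Psi s x k.
Proof. by elim: k => //= k ->; rewrite /traj /= state_hist_modes. Qed.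

Lemma admissible_cost_controller (C g : R) : 0 <= C -> 0 <= g -> g < 1 ->
  (forall x0 s k, enorm (traj A B Psi s x0 k) <= C * g ^+ k * enorm x0) ->
  forall x, admissible_cost A B x ((1 + C * g / (1 - g)) * enorm x).
Proof.
move=> C0 g0 g1 Psi_exp x; exists (controller_strategy x) => s [|N].
  rewrite /partial_cost big_ord0 mulr_ge0 ?enorm_ge0 // addr_ge0 // divr_ge0 ?mulr_ge0 //.
  by rewrite subr_ge0 ltW.
rewrite /partial_cost big_ord_recl mulrDl mul1r lerD2l.
have traj_le (k : 'I_N) :
    enorm (strategy_traj A B x (controller_strategy x) s (lift ord0 k))
    <= C * g * enorm x * g ^+ k.
  rewrite strategy_traj_controller (le_trans (Psi_exp x s k.+1)) //.
  by rewrite exprS mulrA mulrAC.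
apply: le_trans (ler_sum _ (fun k _ => traj_le k)) _.
rewrite -mulr_sumr [_ / _ * _]mulrAC ler_wpM2l ?mulr_ge0 ?enorm_ge0 //.
by rewrite geometric_sum_le ?g0 ?g1.
Qed.

End ControllerStrategy.

Local Close Scope classical_set_scope.

Theorem mainTheorem5 (R : realType) (n m : nat) (Sigma : finType)
  (A : Sigma -> 'M[R]_n) (B : Sigma -> 'M[R]_(n, m))
  (Psi : controller R n m Sigma) (C gamma : R) :
  (0 < #|Sigma|)%N ->
  1 < C -> 0 <= gamma -> gamma < 1 ->
  (forall (x0 : 'cV[R]_n) (s : nat -> Sigma) (k : nat),
      enorm (traj A B Psi s x0 k) <= C * gamma ^+ k * enorm x0) ->
  exists V : 'cV[R]_n -> R,
    [/\ is_norm V,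
        (forall x, enorm x <= V x /\ V x <= C / (1 - gamma) * enorm x) &
        exists Phi : 'cV[R]_n -> 'cV[R]_m,
          [/\ (forall (l : R) (x : 'cV[R]_n), Phi (l *: x) = l *: Phi x),
              (forall (i : Sigma) (x : 'cV[R]_n),
                  V (A i *m x + B i *m Phi x) <= (1 - (1 - gamma) / C) * V x) &
              UES_static A B Phi]].
Proof.
move=> /card_gt0P[s0 _] C1 g0 g1 Psi_exp.
have gamma_lt1 : 0 < 1 - gamma by rewrite subr_gt0.
set K := C / (1 - gamma).
have K1 : 1 < K by rewrite ltr_pdivlMr // mul1r; lra.
have K0 : 0 < K := lt_trans ltr01 K1.
have adm := admissible_cost_controller (ltW (lt_trans ltr01 C1)) g0 g1 Psi_exp.
have c_lt_K : 1 + C * gamma / (1 - gamma) < K.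
  by rewrite -(ltr_pM2r gamma_lt1) mulrDl !divfK ?gt_eqF //; nra.
have V_bounds x : enorm x <= value A B x /\ value A B x <= K * enorm x.
  split; first exact: (enorm_le_value s0 adm x).
  by apply: le_trans (value_le_lin s0 adm x) _; rewrite ler_wpM2r ?enorm_ge0 ?ltW.
exists (value A B); split=> //; first exact: (value_norm s0 adm).
pose P x u := forall i, value A B (A i *m x + B i *m u) <= (1 - K^-1) * value A B x.
have P_scale l x u : P x u -> P (l *: x) (l *: u).
  move=> Pxu i; rewrite -!scalemxAr -scalerDr !(valueZ s0 adm) mulrCA.
  exact: (ler_wpM2l (normr_ge0 l) (Pxu i)).
have [Phi [Phi_hom Phi_P]] :=
  homogeneous_selection P_scale (fun x => value_contraction s0 adm x K0 c_lt_K).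
exists Phi; split=> //; first by move=> i x; rewrite -invf_div; exact: Phi_P.
apply: (UES_static_of_lyapunov K0 _ _ V_bounds (fun i x => Phi_P x i)).
  by rewrite subr_ge0 invf_le1 ?ltW.
by rewrite ltrBlDr ltrDl invr_gt0.
Qed.
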